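(* For every $M\in\mathbb N$ and every prime power $q$, for almost all $a\in(\mathbb F_q^M)^\infty$ (uniform product measure), $$\lim_{n\to\infty}\frac{L_a(n)}{n}=\frac{M}{M+1}.$$
   Context: Let $q$ be a prime power and $M\ge1$. For $a=(a_{k,m})_{k\ge1,\,1\le m\le M}\in(\mathbb F_q^M)^\infty$ and $n\in\mathbb N_0$, the linear complexity $L_a(n)$ is the least $L\ge0$ such that there exist $c_1,\dots,c_L\in\mathbb F_q$ with $a_{k,m}=\sum_{i=1}^L c_i a_{k-i,m}$ for all $L<k\le n$ and all $1\le m\le M$ (a single linear feedback shift register of length $L$ generating the first $n$ terms of all $M$ sequences); $L_a(0)=0$. *)

From HB Require Import structures.
From mathcomp Require Import all_boot all_order all_algebra all_field.
From mathcomp Require Import boolp classical_sets reals topology normedtype sequences.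
From mathcomp Require Import filter.
Import numFieldNormedType.Exports.
Set Implicit Arguments. Unset Strict Implicit. Unset Printing Implicit Defensive.
Import Order.TTheory GRing.Theory Num.Theory.
Local Open Scope ring_scope.

(* A multisequence a in (F^M)^oo is a : nat -> 'I_M -> F, where a k m is the
   paper's a_{k+1, m+1} (0-based indices). *)

(* A single LFSR of length L with coefficients c_1..c_L (here c 0 .. c (L-1))
   generates the first n terms of all M sequences. *)
Definition lfsr_generates (F : fieldType) (M : nat) (a : nat -> 'I_M -> F)
    (n L : nat) : Prop :=
  exists c : nat -> F, forall k : nat, (L <= k < n)%N ->
    forall m : 'I_M, a k m = \sum_(i < L) c i * a (k - i.+1)%N m.

Lemma lfsr_generates_n (F : fieldType) (M : nat) (a : nat -> 'I_M -> F) (n : nat) :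
  exists L, `[< lfsr_generates a n L >].
Proof.
exists n; apply/asboolP; exists (fun _ => 0) => k /andP[H1 H2].
by move: (leq_trans H2 H1); rewrite ltnn.
Qed.

Definition linear_complexity (F : fieldType) (M : nat) (a : nat -> 'I_M -> F)
    (n : nat) : nat :=
  ex_minn (lfsr_generates_n a n).

(* Cylinder set of multisequences with a prescribed prefix of length k
   (given by the first k values of p); its uniform product measure is
   q^(-M k) with q = #|F|. *)
Definition cylinder (F : finFieldType) (M : nat) (k : nat) (p : nat -> 'I_M -> F)
  : set (nat -> 'I_M -> F) :=
  [set a | forall i, (i < k)%N -> forall m, a i m = p i m].

Definition null_set (R : realType) (F : finFieldType) (M : nat)
    (N : set (nat -> 'I_M -> F)) : Prop :=
  forall eps : R, 0 < eps ->
    exists (k : nat -> nat) (p : nat -> nat -> 'I_M -> F),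
      (N `<=` \bigcup_j cylinder (k j) (p j))%classic /\
      forall J : nat, \sum_(j < J) ((#|F|%:R : R) ^- (M * k j)) <= eps.

Definition almost_all (R : realType) (F : finFieldType) (M : nat)
    (P : (nat -> 'I_M -> F) -> Prop) : Prop :=
  null_set R [set a | ~ P a]%classic.

From HB Require Import structures.
From mathcomp Require Import all_boot all_order all_algebra all_field.
From mathcomp Require Import boolp classical_sets reals topology normedtype sequences.
From mathcomp Require Import filter.
From mathcomp Require Import zify ring lra.
Import numFieldNormedType.Exports.
Import Order.TTheory GRing.Theory Num.Theory.
Local Open Scope ring_scope.
Set Implicit Arguments. Unset Strict Implicit. Unset Printing Implicit Defensive.

(* A prefix of linear complexity at most L is
   determined by the L feedback coefficients and its first L terms, so there
   are at most q^(L(M+1)) of them.  If the complexity exceeds L, the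
   (n-L)M x L linear system for the feedback coefficients has dependent rows;
   a dependency d determines the entries at L pivot positions from all the
   others, so there are at most q^((n-L)M) q^(nM-L) such prefixes.  Hence only
   a proportion O(q^-s) of the prefixes satisfy |(M+1) L_a(n) - M n| > s.
   With s = n/(t+1) these proportions are summable in n, so for every t the
   deviating prefixes beyond a threshold N_t give cylinders of arbitrarily
   small total measure; outside their union every a deviates only finitely
   often for each t, which means L_a(n)/n -> M/(M+1). *)

Section LinearComplexity.
Variables (F : fieldType) (M : nat).
Implicit Types (a b : nat -> 'I_M -> F) (n L : nat).

Lemma lfsr_generates_lc a n : lfsr_generates a n (linear_complexity a n).
Proof. by rewrite /linear_complexity; case: ex_minnP => L /asboolP. Qed.

Lemma lfsr_generates_mono a n L L' :
  (L <= L')%N -> lfsr_generates a n L -> lfsr_generates a n L'.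
Proof.
move=> leLL' [c rec_c]; exists (fun i => if (i < L)%N then c i else 0).
move=> k /andP[leL'k ltkn] m; rewrite rec_c ?ltkn ?(leq_trans leLL') //.
rewrite (big_ord_widen_cond L' xpredT (fun i => c i * a (k - i.+1)%N m) leLL').
rewrite [RHS](bigID (fun i : 'I_L' => (i < L)%N)) /= [X in _ = _ + X]big1 ?addr0.
  by apply: eq_bigr => i ->.
by move=> i /negbTE ->; rewrite mul0r.
Qed.

Lemma linear_complexity_leP a n L :
  (linear_complexity a n <= L)%N <-> lfsr_generates a n L.
Proof.
split=> [le_lc | gen]; first exact: lfsr_generates_mono (lfsr_generates_lc a n).
by rewrite /linear_complexity; case: ex_minnP => L0 _; apply; apply/asboolP.
Qed.

Lemma eq_lfsr_generates a b n L : (forall i m, (i < n)%N -> a i m = b i m) ->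
  lfsr_generates a n L -> lfsr_generates b n L.
Proof.
move=> eq_ab [c rec_c]; exists c => k /andP[leLk ltkn] m.
rewrite -eq_ab // rec_c ?leLk ?ltkn //; apply: eq_bigr => i _.
by rewrite eq_ab // (leq_ltn_trans (leq_subr _ _) ltkn).
Qed.

Lemma eq_linear_complexity a b n : (forall i m, (i < n)%N -> a i m = b i m) ->
  linear_complexity a n = linear_complexity b n.
Proof.
move=> eq_ab; apply/eqP; rewrite eqn_leq; apply/andP; split.
  apply/linear_complexity_leP; apply: eq_lfsr_generates (lfsr_generates_lc b n).
  by move=> i m lt_in; rewrite eq_ab.
exact/linear_complexity_leP/(eq_lfsr_generates eq_ab)/lfsr_generates_lc.
Qed.

End LinearComplexity.

Lemma leq_card_bigcup (I T : finType) (P : pred I) (A : I -> {set T}) :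
  (#|\bigcup_(i | P i) A i| <= \sum_(i | P i) #|A i|)%N.
Proof.
apply: (big_ind2 (fun (B : {set T}) s => #|B| <= s)%N) => //; first by rewrite cards0.
move=> B1 s1 B2 s2 le1 le2; apply: leq_trans (leq_card_setU B1 B2) _.
exact: leq_add.
Qed.

Notation word F M n := {ffun 'I_n * 'I_M -> F} (only parsing).

Section Words.
Variables (F : finFieldType) (M : nat).
Local Notation word n := (word F M n).

Definition zext n (w : word n) : nat -> 'I_M -> F :=
  fun i m => if insub i is Some j then w (j, m) else 0.

Definition word_prefix n (a : nat -> 'I_M -> F) : word n :=
  [ffun x : 'I_n * 'I_M => a x.1 x.2].

Lemma zextE n (w : word n) (i : 'I_n) m : zext w i m = w (i, m).
Proof. by rewrite /zext valK. Qed.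

Lemma zext_out n (w : word n) i m : (n <= i)%N -> zext w i m = 0.
Proof. by move=> le_ni; rewrite /zext insubF // ltnNge le_ni. Qed.

Lemma zext_word_prefix n a i m : (i < n)%N -> zext (word_prefix n a) i m = a i m.
Proof. by move=> lt_in; rewrite /zext insubT ffunE. Qed.

End Words.

Section LowComplexity.
Variables (F : finFieldType) (M n L : nat).
Local Notation q := #|F|.
Local Notation word := (word F M n).

Definition lfsr_words (c : {ffun 'I_L -> F}) : {set word} :=
  [set w | [forall k : 'I_n, (L <= k)%N ==>
     [forall m, zext w k m == \sum_(i < L) c i * zext w (k - i.+1) m]]].

Lemma lfsr_words_determined c : {in lfsr_words c &, forall w1 w2,
  (forall i m, (i < L)%N -> zext w1 i m = zext w2 i m) -> w1 = w2}.
Proof.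
move=> w1 w2; rewrite !inE => /forallP rec1 /forallP rec2 eq_seed.
apply/ffunP => -[i m]; rewrite -!zextE; elim/ltn_ind: {i}(i : nat) m => k IH m.
case: (ltnP k L) => [|leLk]; first exact: eq_seed.
case: (ltnP k n) => [ltkn|]; last by move=> le_nk; rewrite !zext_out.
move: (rec1 (Ordinal ltkn)) (rec2 (Ordinal ltkn)); rewrite /= leLk /=.
move=> /forallP/(_ m)/eqP -> /forallP/(_ m)/eqP ->.
by apply: eq_bigr => i _; rewrite IH //; have := ltn_ord i; lia.
Qed.

Lemma card_lfsr_words c : (#|lfsr_words c| <= q ^ (L * M))%N.
Proof.
pose seed (w : word) := [ffun x : 'I_L * 'I_M => zext w x.1 x.2].
apply: leq_trans (@leq_card_in _ _ seed _ _) _; last first.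
  by rewrite card_ffun card_prod !card_ord.
move=> w1 w2 in1 in2 eq_f; apply: (lfsr_words_determined in1 in2) => i m lt_iL.
by move/ffunP/(_ (Ordinal lt_iL, m)): eq_f; rewrite !ffunE.
Qed.

Lemma card_lc_le :
  (#|[set w : word | linear_complexity (zext w) n <= L]| <= q ^ (L * M.+1))%N.
Proof.
apply: (@leq_trans #|(\bigcup_(c : {ffun 'I_L -> F}) lfsr_words c)%SET|).
  apply/subset_leq_card/fintype.subsetP => w; rewrite inE => /linear_complexity_leP[c rec_c].
  apply/bigcupP; exists [ffun i : 'I_L => c i] => //; rewrite inE.
  apply/forallP => k; apply/implyP => leLk; apply/forallP => m.
  by rewrite rec_c ?leLk ?ltn_ord //; apply/eqP/eq_bigr => i _; rewrite ffunE.
apply: leq_trans (leq_card_bigcup xpredT _) _.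
apply: (@leq_trans (\sum_(c : {ffun 'I_L -> F}) q ^ (L * M))%N).
  by apply: leq_sum => c _; apply: card_lfsr_words.
by rewrite sum_nat_const card_ffun !card_ord mulnS expnD.
Qed.

End LowComplexity.

Lemma not_row_free_kernel (F : fieldType) m n (A : 'M[F]_(m, n)) :
  ~~ row_free A -> exists2 d : 'rV_m, d != 0 & d *m A = 0.
Proof. by rewrite -kermx_eq0 => /rowV0Pn[d /sub_kermxP dA0 nz_d]; exists d. Qed.

Section HighComplexity.
Variables (F : finFieldType) (M n L : nat).
Local Notation q := #|F|.
Local Notation word := (word F M n).
Local Notation eqn_index := ('I_(n - L) * 'I_M)%type.
Local Notation r := #|{: eqn_index}|.

Definition eqn_of (i : 'I_r) : eqn_index := enum_val i.

(* Equation (k, m) of the linear system for the feedback coefficients c: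
   a_{L+k,m} = sum_(j < L) c_j a_{L+k-1-j,m}. *)
Definition lfsr_mx (w : word) : 'M[F]_(r, L) :=
  \matrix_(i, j) zext w (L + (eqn_of i).1 - j.+1) (eqn_of i).2.

Lemma row_free_lfsr_generates w : row_free (lfsr_mx w) -> lfsr_generates (zext w) n L.
Proof.
move=> /row_freeP[B AB1].
pose b : 'cV[F]_r := \col_i zext w (L + (eqn_of i).1) (eqn_of i).2.
have Ac : lfsr_mx w *m (B *m b) = b by rewrite mulmxA AB1 mul1mx.
exists (fun j => if insub j is Some j' then (B *m b) j' 0 else 0).
move=> k /andP[leLk ltkn] m; have lt_kL : (k - L < n - L)%N by lia.
move/matrixP/(_ (enum_rank (Ordinal lt_kL, m)) 0): Ac.
rewrite !mxE /eqn_of enum_rankK /= subnKC // => <-.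
by apply: eq_bigr => j _; rewrite valK mulrC /lfsr_mx mxE /eqn_of enum_rankK /= subnKC.
Qed.

Section Pivot.
Variables (d : 'rV[F]_r) (ip : 'I_r).
Hypothesis d_ip : d 0 ip != 0.
Hypothesis ip_max : forall i, d 0 i != 0 -> ((eqn_of i).1 <= (eqn_of ip).1)%N.

Let ks : nat := (eqn_of ip).1.
Let ms := (eqn_of ip).2.

Definition pivot s m := (m == ms) && (ks <= s < ks + L)%N.

(* Column j of d *m lfsr_mx w = 0 expresses d_ip a_{ks+L-1-j, ms} through
   terms outside the pivot positions and earlier terms of sequence ms (the
   other equations for ms have k < ks), so induction on the position works. *)
Lemma ker_lfsr_mx_determined : {in [set w | d *m lfsr_mx w == 0] &,
  forall w1 w2, (forall s m, ~~ pivot s m -> zext w1 s m = zext w2 s m) -> w1 = w2}.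
Proof.
move=> w1 w2; rewrite !inE => /eqP dA1 /eqP dA2 eq_off.
apply/ffunP => -[i m]; rewrite -!zextE; elim/ltn_ind: {i}(i : nat) m => s IH m.
have [piv|] := boolP (pivot s m); last exact: eq_off.
move: piv => /andP[/eqP-> /andP[le_ks lt_sL]].
have lt_j : (ks + L - s.+1 < L)%N by lia.
have pivot_entry w : lfsr_mx w ip (Ordinal lt_j) = zext w s ms.
  by rewrite mxE; congr (zext w _ _); rewrite /= -/ks; lia.
have other_entries : \sum_(i | i != ip) d 0 i * lfsr_mx w1 i (Ordinal lt_j) =
                     \sum_(i | i != ip) d 0 i * lfsr_mx w2 i (Ordinal lt_j).
  apply: eq_bigr => i ne_i_ip; have [->|nz_di] := eqVneq (d 0 i) 0; first by rewrite !mul0r.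
  congr (_ * _); rewrite !mxE.
  have [eq_m|ne_m] := eqVneq (eqn_of i).2 ms; last first.
    by apply: eq_off; rewrite /pivot (negbTE ne_m).
  have lt_k : ((eqn_of i).1 < ks)%N.
    rewrite ltn_neqAle ip_max // andbT; apply: contra ne_i_ip => /eqP eq_k.
    apply/eqP/enum_val_inj; rewrite -/(eqn_of i) -/(eqn_of ip).
    rewrite [eqn_of i]surjective_pairing [eqn_of ip]surjective_pairing eq_m.
    by congr pair; apply/val_inj.
  by apply: IH; rewrite /= -/ks; lia.
have split_col w : (d *m lfsr_mx w) 0 (Ordinal lt_j) =
    d 0 ip * zext w s ms + \sum_(i | i != ip) d 0 i * lfsr_mx w i (Ordinal lt_j).
  by rewrite mxE (bigD1 ip) // pivot_entry.
have := split_col w1; have := split_col w2; rewrite dA1 dA2 other_entries !mxE.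
set rest := \sum_(i | _) _ => e2 e1.
by apply: (mulfI d_ip); apply: (addIr rest); rewrite -e1 -e2.
Qed.

Lemma card_ker_lfsr_mx : (#|[set w : word | d *m lfsr_mx w == 0%R]| <= q ^ (n * M - L))%N.
Proof.
pose D := [set x : 'I_n * 'I_M | ~~ pivot x.1 x.2].
pose restr (w : word) := [ffun x : {x | x \in D} => w (val x)].
apply: leq_trans (@leq_card_in _ _ restr _ _) _.
  move=> w1 w2 in1 in2 eq_r; apply: (ker_lfsr_mx_determined in1 in2) => s m off.
  have [lt_sn|le_ns] := ltnP s n; last by rewrite !zext_out.
  have offD : (Ordinal lt_sn, m) \in D by rewrite inE.
  move/ffunP/(_ (exist (fun x => x \in D) _ offD)): eq_r.
  by rewrite !ffunE /= -[s]/(val (Ordinal lt_sn)) !zextE.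
rewrite card_ffun card_sig leq_pexp2l ?(ltnW (card_finNzRing_gt1 F)) //.
have lt_pivot (j : 'I_L) : (ks + j < n)%N.
  by have := ltn_ord (eqn_of ip).1; have := ltn_ord j; rewrite /ks; lia.
pose at_pivot (j : 'I_L) : 'I_n * 'I_M := (Ordinal (lt_pivot j), ms).
have card_pivots : (L <= #|~: D|)%N.
  rewrite -[X in (X <= _)%N](card_ord L) -(card_imset _ (f := at_pivot)); last first.
    by move=> j1 j2 [] /eqP; rewrite eqn_add2l => /eqP /val_inj.
  apply/subset_leq_card/fintype.subsetP => _ /imsetP[j _ ->].
  by rewrite !inE /= negbK /pivot /= eqxx leq_addr ltn_add2l ltn_ord.
by rewrite cardsCs card_prod !card_ord leq_sub2l.
Qed.

End Pivot.

Lemma card_ker_lfsr_mx_neq0 (d : 'rV[F]_r) : d != 0 ->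
  (#|[set w : word | d *m lfsr_mx w == 0%R]| <= q ^ (n * M - L))%N.
Proof.
move=> nz_d; have [i0 nz_di0] : exists i, d 0 i != 0.
  apply/existsP; apply: contraR nz_d => /existsPn d0.
  by apply/eqP/rowP => i; rewrite mxE; apply/eqP/negPn/d0.
have [ip d_ip ip_max] :=
  @arg_maxnP _ i0 (fun i => d 0 i != 0) (fun i => nat_of_ord (eqn_of i).1) nz_di0.
exact: card_ker_lfsr_mx d_ip ip_max.
Qed.

Lemma card_lc_gt : (L <= n)%N ->
  (#|[set w : word | L < linear_complexity (zext w) n]| <=
     q ^ ((n - L) * M) * q ^ (n * M - L))%N.
Proof.
move=> le_Ln.
pose ker (d : 'rV[F]_r) := [set w : word | d *m lfsr_mx w == 0%R].
apply: (@leq_trans #|\bigcup_(d | d != 0%R) ker d|).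
  apply/subset_leq_card/fintype.subsetP => w; rewrite inE ltnNge => not_gen.
  have /not_row_free_kernel[d nz_d dA0] : ~~ row_free (lfsr_mx w).
    by apply: contra not_gen => /row_free_lfsr_generates/linear_complexity_leP.
  by apply/bigcupP; exists d; rewrite // inE dA0.
apply: leq_trans (leq_card_bigcup _ _) _.
apply: (@leq_trans (\sum_(d : 'rV[F]_r) q ^ (n * M - L))).
  rewrite [X in (_ <= X)%N](bigID (fun d : 'rV[F]_r => d != 0)) /=.
  apply: leq_trans (leq_addr _ _).
  by apply: leq_sum => d; apply: card_ker_lfsr_mx_neq0.
by rewrite sum_nat_const card_mx card_prod !card_ord mul1n mulnC.
Qed.

End HighComplexity.

Section Deviation.
Variables (F : finFieldType) (M : nat).
Hypothesis M_gt0 : (0 < M)%N.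
Local Notation q := #|F|.

Definition lc_deviates (s n : nat) (a : nat -> 'I_M -> F) : bool :=
  let x := linear_complexity a n in
  (M.+1 * x + s < M * n)%N || (M * n + s < M.+1 * x)%N.

Lemma card_lc_deviates s n : (s <= n)%N ->
  (#|[set w : word F M n | lc_deviates s n (zext w)]| * q ^ s <= 2 * q ^ M * q ^ (M * n))%N.
Proof.
move=> le_sn; have q_gt0 : (0 < q)%N := ltnW (card_finNzRing_gt1 F).
pose Llo := ((M * n - s).-1 %/ M.+1)%N; pose Lhi := ((M * n + s) %/ M.+1)%N.
have le_Lhi_n : (Lhi <= n)%N by rewrite -ltnS ltn_divLR //; nia.
have Lhi_big : (M * n + s < Lhi * M.+1 + M.+1)%N.
  by rewrite {1}(divn_eq (M * n + s) M.+1) ltn_add2l ltn_pmod.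
have Lhi_small : (Lhi * M.+1 <= M * n + s)%N := leq_divM _ _.
have sub : [set w : word F M n | lc_deviates s n (zext w)] \subset
    [set w : word F M n | linear_complexity (zext w) n <= Llo]%N :|:
    [set w : word F M n | Lhi < linear_complexity (zext w) n]%N.
  apply/fintype.subsetP => w; rewrite !inE /lc_deviates.
  case/orP=> dev; apply/orP; [left; rewrite leq_divRL //; lia|right].
  by rewrite ltnNge; apply/negP => le_lc; move: dev; nia.
apply: leq_trans (leq_mul (subset_leq_card sub) (leqnn _)) _.
apply: leq_trans (leq_mul (leq_card_setU _ _) (leqnn _)) _.
rewrite mulnDl -mulnA mul2n -addnn; apply: leq_add.
  apply: leq_trans (leq_mul (card_lc_le F M n Llo) (leqnn _)) _.
  rewrite -!expnD leq_pexp2l //; have := leq_divM (M * n - s).-1 M.+1; nia.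
apply: leq_trans (leq_mul (card_lc_gt F M le_Lhi_n) (leqnn _)) _.
rewrite -!expnD leq_pexp2l //; nia.
Qed.

End Deviation.

Section HalfPowers.
Variable R : realType.
Implicit Types (k K T N : nat).

Lemma halfpow_gt0 k : 0 < (2 : R) ^- k.
Proof. by rewrite invr_gt0 exprn_gt0. Qed.

Lemma halfpow_ge0 k : 0 <= (2 : R) ^- k.
Proof. exact/ltW/halfpow_gt0. Qed.

Lemma halfpowD k K : (2 : R) ^- (k + K) = 2 ^- k * 2 ^- K.
Proof. by rewrite exprD invfM. Qed.

Lemma sum_halfpowS N : \sum_(i < N) (2 : R) ^- i.+1 = 1 - 2 ^- N.
Proof.
elim: N => [|N IH]; first by rewrite big_ord0 expr0 invr1 subrr.
by rewrite big_ord_recr /= IH exprS invfM; lra.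
Qed.

Lemma sum_halfpowS_le1 N : \sum_(i < N) (2 : R) ^- i.+1 <= 1.
Proof. by rewrite sum_halfpowS lerBlDr lerDl halfpow_ge0. Qed.

(* Each exponent v occurs T times as n %/ T. *)
Lemma sum_halfpow_div_block T u : (0 < T)%N ->
  \sum_(0 <= n < T * u) (2 : R) ^- (n %/ T) = T%:R * \sum_(0 <= v < u) 2 ^- v.
Proof.
move=> T_gt0; elim: u => [|u IH]; first by rewrite muln0 !big_geq // mulr0.
rewrite mulnSr (@big_cat_nat _ _ _ (T * u)%N) ?leq_addr //= IH big_nat_recr //=.
rewrite mulrDr; congr (_ + _); rewrite -{1}(add0n (T * u)%N) big_addn addKn.
rewrite (eq_big_nat _ _ (F2 := fun _ => 2 ^- u)); last first.
  by move=> i /andP[_ lt_iT]; rewrite mulnC divnDMl // divn_small.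
by rewrite sumr_const_nat subn0 mulr_natl.
Qed.

Lemma sum_halfpow_le2 N : \sum_(0 <= v < N) (2 : R) ^- v <= 2.
Proof.
rewrite big_mkord (eq_bigr (fun v : 'I_N => 2 * 2 ^- v.+1)); last first.
  by move=> v _; rewrite exprS invfM mulrA mulfV ?mul1r ?pnatr_eq0.
by rewrite -mulr_sumr; have := sum_halfpowS_le1 N; lra.
Qed.

Lemma sum_halfpow_div_le T N : (0 < T)%N ->
  \sum_(0 <= n < N) (2 : R) ^- (n %/ T) <= 2 * T%:R.
Proof.
move=> T_gt0; apply: (@le_trans _ _ (\sum_(0 <= n < T * N) 2 ^- (n %/ T))).
  rewrite [X in _ <= X](@big_cat_nat _ _ _ N) ?leq_pmull //= lerDl.
  by apply: sumr_ge0 => n _; apply: halfpow_ge0.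
by rewrite sum_halfpow_div_block // mulrC ler_wpM2r // sum_halfpow_le2.
Qed.

Lemma sum_halfpow_div_tail T K N : (0 < T)%N ->
  \sum_(n < N | (T * K <= n)%N) (2 : R) ^- (n %/ T) <= 2 * T%:R * 2 ^- K.
Proof.
move=> T_gt0; set f := fun n => (2 : R) ^- (n %/ T).
rewrite -(big_mkord (fun n => T * K <= n)%N f).
apply: (@le_trans _ _ (\sum_(0 <= n < T * K + N | (T * K <= n)%N) f n)).
  rewrite [X in _ <= X](@big_cat_nat _ _ _ N) ?leq_addl //= lerDl.
  by apply: sumr_ge0 => n _; apply: halfpow_ge0.
rewrite (@big_cat_nat _ _ _ (T * K)) ?leq_addr //= big_nat_cond big1 ?add0r; last first.
  by move=> n /andP[/andP[_ lt_nTK]]; rewrite leqNgt lt_nTK.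
rewrite -{1}(add0n (T * K)%N) big_addn addKn (eq_bigl xpredT) => [|n]; last first.
  by rewrite leq_addl.
rewrite (eq_bigr (fun n => f n * 2 ^- K)) => [|n _]; last first.
  by rewrite /f [(T * K)%N]mulnC divnDMl // halfpowD.
by rewrite -mulr_suml ler_wpM2r ?halfpow_ge0 ?sum_halfpow_div_le.
Qed.

Lemma halfpow_small (y : R) : 0 < y -> exists K, (2 : R) ^- K <= y.
Proof.
move=> y_gt0; have : 0 <= y^-1 by rewrite invr_ge0 ltW.
move=> /archi_boundP.
set K := Num.Def.archi_bound _ => lt_K; exists K.
rewrite -[y]invrK lef_pV2 ?posrE ?exprn_gt0 ?invr_gt0 //.
apply: (le_trans (ltW lt_K)); rewrite -natrX ler_nat.
exact: ltnW (ltn_expl K (ltnSn 1)).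
Qed.

End HalfPowers.

Section NullSets.
Variables (R : realType) (F : finFieldType) (M : nat).
Local Notation seqs := (nat -> 'I_M -> F).
Local Notation mu k := ((#|F|%:R : R) ^- (M * k)).

Lemma cylinder_measure_ge0 k : 0 <= mu k.
Proof. by rewrite invr_ge0 exprn_ge0 // ler0n. Qed.

Section Flatten.
Variable g : nat -> seq (nat * seqs).
Hypothesis g_neq0 : forall n, (0 < size (g n))%N.

Let x0 : nat * seqs := (0%N, fun _ _ => 0).
Let stages N := flatten (map g (iota 0 N)).

Let stagesS N : stages N.+1 = stages N ++ g N.
Proof. by rewrite /stages -addn1 iotaD map_cat flatten_cat /= cats0. Qed.

Let size_stages N : (N <= size (stages N))%N.
Proof.
elim: N => // N IH; rewrite stagesS size_cat.
by have := g_neq0 N; lia.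
Qed.

Let nth_stages N N' j : (j < size (stages N))%N -> (N <= N')%N ->
  nth x0 (stages N') j = nth x0 (stages N) j.
Proof.
move=> lt_j /subnKC <-; rewrite /stages iotaD map_cat flatten_cat.
by rewrite nth_cat lt_j.
Qed.

(* The j-th cylinder of the enumeration is already fixed after j + 1 stages. *)
Lemma null_set_of_stages (S : set seqs) (eps : R) :
  (forall a, S a -> exists n i, (i < size (g n))%N /\
      cylinder (nth x0 (g n) i).1 (nth x0 (g n) i).2 a) ->
  (forall N, \sum_(n < N) \sum_(c <- g n) mu c.1 <= eps) ->
  exists (k : nat -> nat) (p : nat -> seqs),
    (S `<=` \bigcup_j cylinder (k j) (p j))%classic /\
    forall J : nat, \sum_(j < J) mu (k j) <= eps.
Proof.
move=> cover sum_le.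
exists (fun j => (nth x0 (stages j.+1) j).1), (fun j => (nth x0 (stages j.+1) j).2); split.
  move=> a /cover[n [i [lt_i cyl]]]; exists (size (stages n) + i)%N => //.
  have lt_ni : (size (stages n) + i < size (stages n.+1))%N.
    by rewrite stagesS size_cat ltn_add2l.
  have le_n : (n.+1 <= (size (stages n) + i).+1)%N by have := size_stages n; lia.
  by rewrite (nth_stages lt_ni le_n) stagesS nth_cat ltnNge leq_addr /= addKn.
move=> J; apply: le_trans (sum_le J).
have -> : \sum_(j < J) mu (nth x0 (stages j.+1) j).1 = \sum_(c <- take J (stages J)) mu c.1.
  rewrite (big_nth x0) size_take; have := size_stages J.
  rewrite leq_eqVlt => /predU1P[<-|->]; rewrite ?ltnn big_mkord; apply: eq_bigr => j _;
    by rewrite nth_take // (@nth_stages j.+1) //; have := size_stages j.+1; lia.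
apply: (@le_trans _ _ (\sum_(c <- stages J) mu c.1)).
  rewrite -{2}(cat_take_drop J (stages J)) big_cat /= lerDl.
  by apply: sumr_ge0 => c _; apply: cylinder_measure_ge0.
rewrite /stages big_flatten /= big_map.
by rewrite [iota 0 J](_ : _ = index_iota 0 J) ?big_mkord // /index_iota subn0.
Qed.

End Flatten.

Lemma card_invpow_le_halfpow k : (#|F|%:R : R) ^- k <= 2 ^- k.
Proof.
rewrite lef_pV2 ?posrE ?exprn_gt0 ?ltr0n ?(ltnW (card_finNzRing_gt1 F)) //.
case: k => // k; rewrite ler_pXn2r ?nnegrE ?ler0n //.
by rewrite -[2]/(2%:R) ler_nat card_finNzRing_gt1.
Qed.

Hypothesis M_gt0 : (0 < M)%N.

Lemma cylinder_measure_le k : mu k <= 2 ^- k.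
Proof.
apply: le_trans (card_invpow_le_halfpow _) _.
by rewrite lef_pV2 ?posrE ?exprn_gt0 // ler_eXn2l ?ltr1n // leq_pmull.
Qed.

Lemma null_set_prefixes (S : set seqs) :
  (forall eps : R, 0 < eps -> exists B : forall n, {set word F M n},
     (forall a, S a -> exists n, word_prefix n a \in B n) /\
     forall N, \sum_(n < N) #|B n|%:R * mu n <= eps) ->
  null_set R S.
Proof.
move=> certified eps eps_gt0; have eps2_gt0 : 0 < eps / 2 by lra.
have [B [coverB sumB]] := certified _ eps2_gt0.
have [Kd Kd_small] := halfpow_small eps2_gt0.
(* Padding stage n with a cylinder of measure at most 2^-(n+1) (eps / 2) keeps
   every stage nonempty. *)
pose g n : seq (nat * seqs) :=
  ((n.+1 + Kd)%N, fun _ _ => 0) :: [seq (n, zext w) | w <- enum (B n)].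
apply: (@null_set_of_stages g (fun n => erefl)).
  move=> a /coverB[n Bna]; exists n, (index (word_prefix n a) (enum (B n))).+1.
  rewrite /= size_map ltnS index_mem mem_enum Bna; split => //.
  rewrite (nth_map (word_prefix n a)) ?index_mem ?mem_enum // nth_index ?mem_enum //.
  by move=> i lt_in m; rewrite /= zext_word_prefix.
move=> N; rewrite (eq_bigr (fun n : 'I_N => mu (n.+1 + Kd) + #|B n|%:R * mu n)); last first.
  by move=> n _; rewrite big_cons big_map big_enum /= sumr_const mulr_natl.
rewrite big_split /=; have := sumB N; suff : \sum_(n < N) mu (n.+1 + Kd) <= eps / 2 by lra.
apply: (@le_trans _ _ (\sum_(n < N) 2 ^- n.+1 * 2 ^- Kd)).
  by apply: ler_sum => n _; rewrite -halfpowD cylinder_measure_le.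
rewrite -mulr_suml; apply: le_trans Kd_small.
by rewrite ler_piMl ?halfpow_ge0 ?sum_halfpowS_le1.
Qed.

End NullSets.

Local Open Scope classical_set_scope.
Local Open Scope ring_scope.

Lemma ratio_dist_le (R : realFieldType) (c N X s T eps : R) :
  0 <= c -> 0 < N -> 0 <= s -> 0 < eps ->
  `|c * N - (c + 1) * X| <= s -> s * T <= N -> 1 <= eps * T ->
  `|c / (c + 1) - X / N| <= eps.
Proof.
move=> c_ge0 N_gt0 s_ge0 eps_gt0 dist_le sT_le epsT_ge1.
have c1_gt0 : 0 < c + 1 by lra.
have -> : c / (c + 1) - X / N = (c * N - (c + 1) * X) / ((c + 1) * N).
  by field; apply/andP; split; apply: lt0r_neq0.
rewrite normf_div (ger0_norm (ltW (mulr_gt0 c1_gt0 N_gt0))) ler_pdivrMr ?mulr_gt0 //.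
have s_le : s <= eps * N.
  apply: (@le_trans _ _ (s * (eps * T))); first exact: ler_peMr.
  by rewrite mulrCA ler_wpM2l // ltW.
apply: le_trans dist_le (le_trans s_le _).
by rewrite ler_wpM2l ?(ltW eps_gt0) // ler_peMl ?(ltW N_gt0) // lerDr.
Qed.

Section Exceptional.
Variables (R : realType) (F : finFieldType) (M : nat).
Hypothesis M_gt0 : (0 < M)%N.
Local Notation q := #|F|.
Local Notation mu k := ((q%:R : R) ^- (M * k)).
Local Notation lc_ratio a := (fun n : nat => ((linear_complexity a n)%:R / n%:R : R)).

Lemma lc_ratio_cvg (a : nat -> 'I_M -> F) :
  (forall t, exists N0, forall n, (N0 <= n)%N -> ~~ lc_deviates (n %/ t.+1) n a) ->
  lc_ratio a @ \oo --> (M%:R / M.+1%:R : R).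
Proof.
move=> eventually_close; apply/cvgrPdist_le => eps eps_gt0.
have [t epst_ge1] : exists t : nat, 1 <= eps * t.+1%:R.
  have : 0 <= eps^-1 by rewrite invr_ge0 ltW.
  move=> /archi_boundP; set t := Num.Def.archi_bound _ => lt_t; exists t.
  by rewrite -ler_pdivrMl // mulr1 (le_trans (ltW lt_t)) // ler_nat.
have [N0 close] := eventually_close t.
exists N0.+1 => // n /= lt_N0n.
have := close n (ltnW lt_N0n); rewrite /lc_deviates negb_or -!leqNgt => /andP[lo hi].
rewrite -[M.+1%:R]natr1; apply: (ratio_dist_le (s := (n %/ t.+1)%:R) (T := t.+1%:R)) => //.
- by rewrite ltr0n; lia.
- move: lo hi; rewrite -!(ler_nat R) !natrD !natrM => lo hi.
  by rewrite ler_norml; apply/andP; split; lra.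
- by rewrite -natrM ler_nat leq_divM.
Qed.

Definition deviating_words (t n : nat) : {set word F M n} :=
  [set w | lc_deviates (n %/ t.+1) n (zext w)].

Lemma deviating_words_measure t n :
  #|deviating_words t n|%:R * mu n <= (2 * q ^ M)%:R * 2 ^- (n %/ t.+1).
Proof.
have q_gt0 : (0 : R) < q%:R by rewrite ltr0n (ltnW (card_finNzRing_gt1 F)).
have card_le : #|deviating_words t n|%:R * q%:R ^+ (n %/ t.+1) <=
               (2 * q ^ M)%:R * q%:R ^+ (M * n) :> R.
  by rewrite -!natrX -!natrM ler_nat card_lc_deviates ?leq_div.
apply: (@le_trans _ _ ((2 * q ^ M)%:R * q%:R ^- (n %/ t.+1))); last first.
  by rewrite ler_wpM2l ?ler0n ?card_invpow_le_halfpow.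
by rewrite ler_pdivrMr ?exprn_gt0 // mulrAC ler_pdivlMr ?exprn_gt0.
Qed.

Definition exceptional_cover (K : nat -> nat) n : {set word F M n} :=
  \bigcup_(t < n | (t.+1 * K t <= n)%N) deviating_words t n.

Lemma exceptional_cover_covers K (a : nat -> 'I_M -> F) :
  ~ (lc_ratio a @ \oo --> (M%:R / M.+1%:R : R)) ->
  exists n, word_prefix n a \in exceptional_cover K n.
Proof.
move=> not_cvg; apply: contrapT => not_covered; apply/not_cvg/lc_ratio_cvg => t.
exists (t.+1 + t.+1 * K t)%N => n le_n; apply/negP => dev; apply: not_covered.
have lt_tn : (t < n)%N by lia.
exists n; apply/bigcupP; exists (Ordinal lt_tn); first by rewrite /=; lia.
rewrite inE /lc_deviates (@eq_linear_complexity _ _ _ a) // => i m lt_in.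
exact: zext_word_prefix.
Qed.

Lemma sum_exceptional_cover K N :
  \sum_(n < N) #|exceptional_cover K n|%:R * mu n <=
    (2 * q ^ M)%:R * \sum_(t < N) 2 * t.+1%:R * 2 ^- K t.
Proof.
set C : R := (2 * q ^ M)%:R.
apply: (@le_trans _ _
    (\sum_(n < N) \sum_(t < N | (t.+1 * K t <= n)%N) C * 2 ^- (n %/ t.+1))).
  apply: ler_sum => n _.
  apply: (@le_trans _ _ (\sum_(t < n | (t.+1 * K t <= n)%N) #|deviating_words t n|%:R * mu n)).
    rewrite -mulr_suml ler_wpM2r ?cylinder_measure_ge0 // -natr_sum ler_nat.
    exact: leq_card_bigcup.
  apply: (@le_trans _ _ (\sum_(t < n | (t.+1 * K t <= n)%N) C * 2 ^- (n %/ t.+1))).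
    by apply: ler_sum => t _; apply: deviating_words_measure.
  rewrite (big_ord_widen_cond N (fun t => t.+1 * K t <= n)%N
    (fun t => C * 2 ^- (n %/ t.+1)) (ltnW (ltn_ord n))).
  rewrite [X in _ <= X](bigID (fun t : 'I_N => (t < n)%N)) /= lerDl.
  by apply: sumr_ge0 => t _; rewrite mulr_ge0 ?ler0n ?halfpow_ge0.
rewrite (exchange_big_dep xpredT) //= mulr_sumr; apply: ler_sum => t _.
by rewrite -mulr_sumr ler_wpM2l ?ler0n ?sum_halfpow_div_tail.
Qed.

End Exceptional.

Theorem mainTheorem16 (R : realType) (F : finFieldType) (M : nat) :
  (0 < M)%N ->
  almost_all R (fun a : nat -> 'I_M -> F =>
    (fun n : nat => ((linear_complexity a n)%:R / n%:R : R)) @ \oo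
      --> (M%:R / (M.+1)%:R : R)).
Proof.
move=> M_gt0; apply: null_set_prefixes => // eps eps_gt0.
pose C : R := (2 * #|F| ^ M)%:R.
have /choice[K K_small] : forall t, exists k,
    C * (2 * t.+1%:R * 2 ^- k) <= eps * 2 ^- t.+1.
  move=> t.
  have pos : 0 < C * (2 * t.+1%:R).
    by rewrite !mulr_gt0 ?ltr0n // muln_gt0 expn_gt0 (ltnW (card_finNzRing_gt1 F)).
  have [k k_small] := halfpow_small (divr_gt0 (mulr_gt0 eps_gt0 (halfpow_gt0 R t.+1)) pos).
  by exists k; rewrite mulrA mulrC -ler_pdivlMr.
exists (exceptional_cover F M K); split; first exact: exceptional_cover_covers.
move=> N; apply: le_trans (sum_exceptional_cover R F M_gt0 K N) _.
rewrite mulr_sumr; apply: (@le_trans _ _ (\sum_(t < N) eps * 2 ^- t.+1)).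
  by apply: ler_sum => t _; apply: K_small.
by rewrite -mulr_sumr ler_piMr ?(ltW eps_gt0) ?sum_halfpowS_le1.
Qed.
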